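(* Let $\phi:\mathrm{dom}(\phi)\to\mathbb{Z}^n$ be a virtual endomorphism of $\mathbb{Z}^n$ and let $A=\phi\otimes\mathbb{R}:\mathbb{R}^n\to\mathbb{R}^n$ be its unique $\mathbb{R}$-linear extension. Suppose the matrix of $A$ has nonnegative entries. Then the contraction coefficient $\rho(\phi)$ equals the Perron–Frobenius leading eigenvalue (spectral radius) $\lambda(A)$ of $A$.
   Context: A virtual endomorphism of a group $G$ is a homomorphism $\phi:\mathrm{dom}(\phi)\to G$ defined on a finite-index subgroup $\mathrm{dom}(\phi)$. For finitely generated $G$ with word length $|\cdot|$ relative to a finite symmetric generating set, the contraction coefficient is $\rho(\phi)=\limsup_{m\to\infty}\big(\limsup_{g\in\mathrm{dom}(\phi^{\circ m}),|g|\to\infty}|\phi^{\circ m}(g)|/|g|\big)^{1/m}$, where $\phi^{\circ m}$ is the $m$-fold composite on its natural domain; it does not depend on the generating set. *)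

From Stdlib Require Import Reals ZArith List.
Open Scope R_scope.

(** Elements of Z^n: functions nat -> Z vanishing at indices >= n. *)
Definition vecZ := nat -> Z.
Definition inZn (n : nat) (v : vecZ) : Prop := forall i, (n <= i)%nat -> v i = 0%Z.
Definition vadd (u v : vecZ) : vecZ := fun i => (u i + v i)%Z.
Definition vopp (u : vecZ) : vecZ := fun i => (- u i)%Z.

Record finite_index_subgroup (n : nat) (D : vecZ -> Prop) : Prop := {
  fis_sub  : forall g, D g -> inZn n g;
  fis_zero : D (fun _ => 0%Z);
  fis_add  : forall g h, D g -> D h -> D (vadd g h);
  fis_opp  : forall g, D g -> D (vopp g);
  fis_index : exists reps : list vecZ,
      forall g, inZn n g -> exists r, In r reps /\ D (vadd g (vopp r))
}.

(** Virtual endomorphism of Z^n: a homomorphism phi : D -> Z^n, D of finite index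
    (values of phi outside D are irrelevant). *)
Record virtual_endo (n : nat) (D : vecZ -> Prop) (phi : vecZ -> vecZ) : Prop := {
  ve_dom : finite_index_subgroup n D;
  ve_into : forall g, D g -> inZn n (phi g);
  ve_hom : forall g h, D g -> D h -> forall i, phi (vadd g h) i = (phi g i + phi h i)%Z
}.

(** Natural domain of the m-fold composite phi^m = Nat.iter m phi. *)
Fixpoint dom_iter (n : nat) (D : vecZ -> Prop) (phi : vecZ -> vecZ) (m : nat) (g : vecZ)
  : Prop :=
  match m with
  | O => inZn n g
  | S m' => dom_iter n D phi m' g /\ D (Nat.iter m' phi g)
  end.

Definition is_word (S : list vecZ) (k : nat) (g : vecZ) : Prop :=
  exists l : list vecZ, length l = k /\ (forall s, In s l -> In s S) /\
    forall i, g i = fold_right (fun s acc => (s i + acc)%Z) 0%Z l.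

Definition sym_gen_set (n : nat) (S : list vecZ) : Prop :=
  (forall s, In s S -> inZn n s) /\
  (forall s, In s S -> exists s', In s' S /\ forall i, s' i = (- s i)%Z) /\
  (forall g, inZn n g -> exists k, is_word S k g).

Definition word_length (S : list vecZ) (g : vecZ) (k : nat) : Prop :=
  is_word S k g /\ forall k', is_word S k' g -> (k <= k')%nat.

(** L = limsup_{g in dom(phi^m), |g| -> oo} |phi^m g| / |g|  (L a real number). *)
Definition inner_limsup (n : nat) (S : list vecZ) (D : vecZ -> Prop) (phi : vecZ -> vecZ)
  (m : nat) (L : R) : Prop :=
  forall eps, 0 < eps ->
    (exists R0, forall g k kg, dom_iter n D phi m g -> word_length S g k ->
        word_length S (Nat.iter m phi g) kg -> R0 <= INR k ->
        INR kg / INR k <= L + eps) /\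
    (forall R0, exists g k kg, dom_iter n D phi m g /\ word_length S g k /\
        word_length S (Nat.iter m phi g) kg /\ R0 <= INR k /\
        L - eps <= INR kg / INR k).

Definition limsup_seq (u : nat -> R) (r : R) : Prop :=
  forall eps, 0 < eps ->
    (exists N, forall m, (N <= m)%nat -> u m <= r + eps) /\
    (forall N, exists m, (N <= m)%nat /\ r - eps <= u m).

(** nonnegative m-th root (x^(1/m) for x > 0, and 0 for x <= 0). *)
Definition rootn (m : nat) (x : R) : R :=
  if Rle_dec x 0 then 0 else Rpower x (/ INR m).

Definition contraction_coefficient (n : nat) (S : list vecZ) (D : vecZ -> Prop)
  (phi : vecZ -> vecZ) (r : R) : Prop :=
  exists L : nat -> R,
    (forall m, (1 <= m)%nat -> inner_limsup n S D phi m (L m)) /\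
    limsup_seq (fun m => rootn m (L m)) r.

(** Real n x n matrices as nat -> nat -> R (entries at indices < n). *)
Fixpoint sumR (n : nat) (f : nat -> R) : R :=
  match n with O => 0 | S k => sumR k f + f k end.

Definition Cmul (a b : R * R) : R * R :=
  (fst a * fst b - snd a * snd b, fst a * snd b + snd a * fst b).
Definition Cmod (a : R * R) : R := sqrt (fst a * fst a + snd a * snd a).

Definition is_eigenvalue (n : nat) (A : nat -> nat -> R) (lam : R * R) : Prop :=
  exists v : nat -> R * R,
    (exists i, (i < n)%nat /\ v i <> (0, 0)) /\
    forall i, (i < n)%nat ->
      (sumR n (fun j => A i j * fst (v j)), sumR n (fun j => A i j * snd (v j)))
      = Cmul lam (v i).

Definition is_spectral_radius (n : nat) (A : nat -> nat -> R) (r : R) : Prop :=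
  (exists lam, is_eigenvalue n A lam /\ Cmod lam = r) /\
  (forall lam, is_eigenvalue n A lam -> Cmod lam <= r).

Definition linear_extension (n : nat) (D : vecZ -> Prop) (phi : vecZ -> vecZ)
  (A : nat -> nat -> R) : Prop :=
  forall g, D g -> forall i, (i < n)%nat ->
    IZR (phi g i) = sumR n (fun j => A i j * IZR (g j)).

(** We show that the contraction coefficient [rho(phi)] and the
    spectral radius of [A] both equal the growth rate
        [growth_rate A = inf_m (mass A^m)^(1/m)],
    where [mass B] is the sum of the entries of [B].  For a nonnegative matrix the
    mass is a submultiplicative norm, so this infimum governs the growth of [A^m].

    An eigenvalue [lam] with eigenvector [v] gives
      [|lam|^m |v| <= A^m |v|], hence [|lam|^m <= mass A^m] and [|lam| <= growth_rate].
      Conversely, the truncated resolvents [sum_{m<M} A^m 1 / t^(m+1)] have mass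
      blowing up as [t] decreases to the growth rate; normalized, they are approximate
      eigenvectors, and a limit point (Bolzano-Weierstrass) is a Perron eigenvector.
    - Contraction coefficient.  Word length is comparable to the [l^1] norm, so
      [|phi^m g| / |g|] is at most a constant times [mass A^m]; the domain of [phi^m]
      contains [p^m Z^n], and testing on multiples of a basis vector selecting the
      largest entry of [A^m] shows the limsup is at least [mass A^m] over a constant.
      Constant factors disappear under [m]-th roots, so [rho(phi) = growth_rate A]. *)

From Stdlib Require Import Reals ZArith List Lra Lia Psatz Classical FunctionalExtensionality IndefiniteDescription.
Open Scope R_scope.

Lemma sumR_ext d f g : (forall k, (k < d)%nat -> f k = g k) -> sumR d f = sumR d g.
Proof.
  induction d as [|d IH]; intros Hfg; simpl; auto.
  rewrite IH by (intros; apply Hfg; lia). rewrite Hfg by lia. reflexivity.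
Qed.

Lemma sumR_le d f g : (forall k, (k < d)%nat -> f k <= g k) -> sumR d f <= sumR d g.
Proof.
  induction d as [|d IH]; intros Hfg; simpl; [lra|].
  assert (f d <= g d) by (apply Hfg; lia).
  assert (sumR d f <= sumR d g) by (apply IH; intros; apply Hfg; lia).
  lra.
Qed.

Lemma sumR_zero d : sumR d (fun _ => 0) = 0.
Proof. induction d as [|d IH]; simpl; [|rewrite IH]; lra. Qed.

Lemma sumR_nonneg d f : (forall k, (k < d)%nat -> 0 <= f k) -> 0 <= sumR d f.
Proof. intros Hf. rewrite <- (sumR_zero d). apply sumR_le; auto. Qed.

Lemma sumR_plus d f g : sumR d (fun k => f k + g k) = sumR d f + sumR d g.
Proof. induction d as [|d IH]; simpl; [|rewrite IH]; lra. Qed.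

Lemma sumR_minus d f g : sumR d (fun k => f k - g k) = sumR d f - sumR d g.
Proof. induction d as [|d IH]; simpl; [|rewrite IH]; lra. Qed.

Lemma sumR_scal d c f : sumR d (fun k => c * f k) = c * sumR d f.
Proof. induction d as [|d IH]; simpl; [|rewrite IH]; lra. Qed.

Lemma sumR_scal_r d c f : sumR d (fun k => f k * c) = sumR d f * c.
Proof. induction d as [|d IH]; simpl; [|rewrite IH]; lra. Qed.

Lemma sumR_swap d e f :
  sumR d (fun i => sumR e (fun j => f i j)) = sumR e (fun j => sumR d (fun i => f i j)).
Proof.
  induction d as [|d IH]; simpl; [rewrite sumR_zero; reflexivity|].
  rewrite IH, <- sumR_plus; reflexivity.
Qed.

Lemma sumR_abs d f : Rabs (sumR d f) <= sumR d (fun k => Rabs (f k)).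
Proof.
  induction d as [|d IH]; simpl; [rewrite Rabs_R0; lra|].
  pose proof (Rabs_triang (sumR d f) (f d)); lra.
Qed.

Lemma sumR_term d f k :
  (forall j, (j < d)%nat -> 0 <= f j) -> (k < d)%nat -> f k <= sumR d f.
Proof.
  induction d as [|d IH]; intros Hf Hk; [lia|]. simpl.
  assert (0 <= f d) by (apply Hf; lia).
  destruct (Nat.eq_dec k d) as [->|Hkd].
  - assert (0 <= sumR d f) by (apply sumR_nonneg; intros; apply Hf; lia). lra.
  - assert (f k <= sumR d f) by (apply IH; [intros; apply Hf|]; lia). lra.
Qed.

Lemma sumR_lt_const d f c :
  (1 <= d)%nat -> (forall k, (k < d)%nat -> f k < c) -> sumR d f < INR d * c.
Proof.
  induction d as [|d IH]; intros Hd Hf; [lia|]. simpl sumR. rewrite S_INR.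
  assert (f d < c) by (apply Hf; lia).
  destruct d as [|d]; [simpl; lra|].
  assert (sumR (S d) f < INR (S d) * c) by (apply IH; [lia|intros; apply Hf; lia]). lra.
Qed.

Lemma telescope M (g : nat -> R) : sumR M (fun m => g m - g (S m)) = g 0%nat - g M.
Proof. induction M as [|M IH]; simpl; [|rewrite IH]; lra. Qed.

Definition delta (i j : nat) : R := if Nat.eqb i j then 1 else 0.

Lemma sumR_delta_r d f k : (k < d)%nat -> sumR d (fun j => f j * delta j k) = f k.
Proof.
  induction d as [|d IH]; intros Hk; [lia|]. simpl. unfold delta at 2.
  destruct (Nat.eqb_spec d k) as [->|Hdk].
  - rewrite (sumR_ext _ _ (fun _ => 0)), sumR_zero; [lra|].
    intros j Hj. unfold delta. destruct (Nat.eqb_spec j k); [lia|lra].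
  - rewrite IH by lia. lra.
Qed.

Lemma sumR_delta_l d f k : (k < d)%nat -> sumR d (fun j => delta k j * f j) = f k.
Proof.
  intros Hk. rewrite <- (sumR_delta_r d f k Hk). apply sumR_ext. intros j _.
  unfold delta. destruct (Nat.eqb_spec k j), (Nat.eqb_spec j k); try lia; lra.
Qed.

Lemma double_sum_le_max_entry d (F : nat -> nat -> R) : (1 <= d)%nat ->
  exists i j, (i < d)%nat /\ (j < d)%nat /\
    sumR d (fun i => sumR d (fun j => F i j)) <= INR d * INR d * F i j.
Proof.
  intros Hd. set (T := sumR d (fun i => sumR d (fun j => F i j))).
  assert (Hd0 : 0 < INR d) by (apply lt_0_INR; lia).
  assert (Hd2 : 0 < INR d * INR d) by nra.
  assert (HT : INR d * (INR d * (T / (INR d * INR d))) = T) by (field; lra).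
  apply NNPP; intros Hno.
  assert (Hsmall : forall i j, (i < d)%nat -> (j < d)%nat -> F i j < T / (INR d * INR d)).
  { intros i j Hi Hj. destruct (Rlt_le_dec (F i j) (T / (INR d * INR d))) as [|Hle]; auto.
    exfalso; apply Hno. exists i, j. split; [auto|split; [auto|]].
    apply (Rmult_le_compat_l (INR d * INR d)) in Hle; [|lra].
    rewrite Rmult_assoc in Hle. rewrite HT in Hle. lra. }
  assert (Hlt : T < INR d * (INR d * (T / (INR d * INR d))))
    by (apply sumR_lt_const; auto; intros; apply sumR_lt_const; auto).
  lra.
Qed.

Fixpoint Apow (n : nat) (A : nat -> nat -> R) (m : nat) (i j : nat) : R :=
  match m with
  | O => delta i j
  | S m' => sumR n (fun k => A i k * Apow n A m' k j)
  end.

(** For a nonnegative matrix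
    the total mass is a submultiplicative norm of [A^m]; it is the quantity
    both the spectral radius and the contraction coefficient are compared to. *)
Definition row_mass (n : nat) (A : nat -> nat -> R) (m i : nat) : R :=
  sumR n (fun j => Apow n A m i j).
Definition mass (n : nat) (A : nat -> nat -> R) (m : nat) : R :=
  sumR n (fun i => row_mass n A m i).

Section NonnegativeMatrix.
Variable n : nat.
Variable A : nat -> nat -> R.
Hypothesis A_nonneg : forall i j, (i < n)%nat -> (j < n)%nat -> 0 <= A i j.

Lemma Apow_nonneg m i j : (i < n)%nat -> (j < n)%nat -> 0 <= Apow n A m i j.
Proof.
  revert i j; induction m as [|m IH]; intros i j Hi Hj; simpl.
  - unfold delta; destruct (Nat.eqb i j); lra.
  - apply sumR_nonneg; intros. apply Rmult_le_pos; auto.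
Qed.

Lemma Apow_add a c i j : (i < n)%nat -> (j < n)%nat ->
  Apow n A (a + c) i j = sumR n (fun k => Apow n A a i k * Apow n A c k j).
Proof.
  revert i j; induction a as [|a IH]; intros i j Hi Hj; simpl.
  - rewrite sumR_delta_l; auto.
  - rewrite (sumR_ext _ _ (fun l => sumR n (fun k => A i l * (Apow n A a l k * Apow n A c k j))))
      by (intros; rewrite IH, sumR_scal; auto).
    rewrite sumR_swap. apply sumR_ext; intros.
    rewrite <- sumR_scal_r. apply sumR_ext; intros. ring.
Qed.

Lemma row_mass_nonneg m i : (i < n)%nat -> 0 <= row_mass n A m i.
Proof. intros. apply sumR_nonneg; intros; apply Apow_nonneg; auto. Qed.

Lemma mass_nonneg m : 0 <= mass n A m.
Proof. apply sumR_nonneg; intros; apply row_mass_nonneg; auto. Qed.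

Lemma row_mass_le_mass m i : (i < n)%nat -> row_mass n A m i <= mass n A m.
Proof. intros. apply (sumR_term n (row_mass n A m)); auto. intros; apply row_mass_nonneg; auto. Qed.

Lemma row_mass_0 i : (i < n)%nat -> row_mass n A 0 i = 1.
Proof.
  intros Hi. unfold row_mass. simpl.
  rewrite (sumR_ext _ _ (fun j => delta i j * 1)) by (intros; lra).
  apply (sumR_delta_l n (fun _ => 1)); auto.
Qed.

Lemma row_mass_S m i : (i < n)%nat ->
  row_mass n A (S m) i = sumR n (fun k => A i k * row_mass n A m k).
Proof.
  intros. unfold row_mass. simpl. rewrite sumR_swap.
  apply sumR_ext; intros. rewrite sumR_scal. auto.
Qed.

Lemma mass_0 : mass n A 0 = INR n.
Proof.
  unfold mass. rewrite (sumR_ext _ _ (fun _ => 1)) by (intros; apply row_mass_0; auto).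
  clear A_nonneg. induction n as [|d IH]; [reflexivity|]. simpl sumR. rewrite S_INR, IH. lra.
Qed.

Lemma mass_submult a c : mass n A (a + c) <= mass n A a * mass n A c.
Proof.
  unfold mass at 2. rewrite <- sumR_scal_r. apply sumR_le; intros i Hi.
  unfold row_mass.
  rewrite (sumR_ext _ _ (fun j => sumR n (fun k => Apow n A a i k * Apow n A c k j)))
    by (intros; apply Apow_add; auto).
  rewrite sumR_swap, <- sumR_scal_r. apply sumR_le; intros k Hk.
  rewrite sumR_scal. apply Rmult_le_compat_l; [apply Apow_nonneg; auto|].
  apply row_mass_le_mass; auto.
Qed.

Lemma mass_pow k j : mass n A (S j * k) <= mass n A k ^ S j.
Proof.
  induction j as [|j IH]; [simpl; rewrite Nat.add_0_r; lra|].
  replace (S (S j) * k)%nat with (k + S j * k)%nat by lia.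
  eapply Rle_trans; [apply mass_submult|].
  change (mass n A k ^ S (S j)) with (mass n A k * mass n A k ^ S j).
  apply Rmult_le_compat_l; [apply mass_nonneg|auto].
Qed.

End NonnegativeMatrix.

Lemma pow_lt_compat x y m : 0 <= x < y -> (1 <= m)%nat -> x ^ m < y ^ m.
Proof.
  intros Hxy Hm. induction m as [|m IH]; [lia|].
  destruct m as [|m]; [simpl; lra|].
  assert (x ^ S m < y ^ S m) by (apply IH; lia).
  assert (0 <= x ^ S m) by (apply pow_le; lra).
  simpl in *. nra.
Qed.

Lemma rootn_nonneg m x : 0 <= rootn m x.
Proof. unfold rootn. destruct (Rle_dec x 0); [lra|]. left; apply exp_pos. Qed.

Lemma rootn_pos_eq m x : 0 < x -> rootn m x = Rpower x (/ INR m).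
Proof. intros. unfold rootn. destruct (Rle_dec x 0); lra. Qed.

Lemma rootn_0 m : rootn m 0 = 0.
Proof. unfold rootn. destruct (Rle_dec 0 0); lra. Qed.

Lemma rootn_pow_inv m x : (1 <= m)%nat -> 0 < x -> rootn m x ^ m = x.
Proof.
  intros Hm Hx. rewrite rootn_pos_eq by auto.
  rewrite <- Rpower_pow by (unfold Rpower; apply exp_pos).
  rewrite Rpower_mult, Rinv_l by (apply not_0_INR; lia). apply Rpower_1; auto.
Qed.

Lemma rootn_of_pow m t : (1 <= m)%nat -> 0 <= t -> rootn m (t ^ m) = t.
Proof.
  intros Hm [Ht|<-]; [|rewrite pow_i, rootn_0 by lia; reflexivity].
  rewrite rootn_pos_eq, <- Rpower_pow, Rpower_mult by (auto; apply pow_lt; auto).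
  rewrite Rinv_r by (apply not_0_INR; lia). apply Rpower_1; auto.
Qed.

Lemma rootn_lt_iff m x t : (1 <= m)%nat -> 0 <= x -> 0 <= t -> rootn m x < t <-> x < t ^ m.
Proof.
  intros Hm [Hx|<-] Ht.
  - rewrite <- (rootn_pow_inv m x) at 2 by auto. pose proof (rootn_nonneg m x).
    split; intros Hlt; [apply pow_lt_compat; auto; lra|].
    destruct (Rlt_le_dec (rootn m x) t) as [|Hle]; auto.
    pose proof (pow_incr t (rootn m x) m ltac:(lra)). lra.
  - rewrite rootn_0. destruct Ht as [Ht|<-].
    + split; intros; [apply pow_lt|]; auto.
    + rewrite pow_i by lia. lra.
Qed.

Lemma rootn_mono m x y : (1 <= m)%nat -> 0 <= x <= y -> rootn m x <= rootn m y.
Proof.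
  intros Hm Hxy. destruct (Rlt_le_dec (rootn m y) (rootn m x)) as [Hlt|]; auto.
  apply rootn_lt_iff in Hlt; [|auto|lra|apply rootn_nonneg].
  destruct (proj1 Hxy) as [Hx|<-].
  - rewrite rootn_pow_inv in Hlt; auto. lra.
  - rewrite rootn_0 in Hlt. rewrite pow_i in Hlt by lia. lra.
Qed.

Lemma rootn_mul m a x : (1 <= m)%nat -> 0 < a -> 0 <= x ->
  rootn m (a * x) = Rpower a (/ INR m) * rootn m x.
Proof.
  intros Hm Ha [Hx|<-]; [|rewrite Rmult_0_r, !rootn_0; ring].
  rewrite !rootn_pos_eq, Rpower_mult_distr by (auto; apply Rmult_lt_0_compat; auto).
  reflexivity.
Qed.

Lemma rootn_bound m x K t : (1 <= m)%nat -> 0 < K -> 0 <= t -> 0 <= x ->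
  x <= K * t ^ m -> rootn m x <= Rpower K (/ INR m) * t.
Proof.
  intros Hm HK Ht Hx Hle.
  rewrite <- (rootn_of_pow m t), <- rootn_mul by (auto; apply pow_le; auto).
  apply rootn_mono; auto.
Qed.

(** [K^(1/m) -> 1], from the continuity of [exp] at [0]. *)
Lemma Rpower_inv_lim K d : 0 < K -> 0 < d ->
  exists N, forall m, (N <= m)%nat -> Rabs (Rpower K (/ INR m) - 1) < d.
Proof.
  intros HK Hd.
  destruct (derivable_continuous_pt _ _ (derivable_pt_exp 0) d Hd) as [a [Ha Hexp]].
  destruct (INR_unbounded (Rmax 1 (Rabs (ln K) / a))) as [N HN].
  exists N. intros m Hm.
  assert (HmN : INR N <= INR m) by (apply le_INR; auto).
  pose proof (Rmax_l 1 (Rabs (ln K) / a)); pose proof (Rmax_r 1 (Rabs (ln K) / a)).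
  assert (Hy : Rabs (/ INR m * ln K) < a).
  { rewrite Rabs_mult, Rabs_inv, (Rabs_right (INR m)) by lra.
    apply (Rmult_lt_reg_l (INR m)); [lra|]. rewrite <- Rmult_assoc, Rinv_r by lra.
    replace (Rabs (ln K)) with (Rabs (ln K) / a * a) by (field; lra). nra. }
  unfold Rpower. destruct (Req_dec (/ INR m * ln K) 0) as [->|Hne].
  - rewrite exp_0, Rminus_diag, Rabs_R0; auto.
  - pose proof (Hexp (/ INR m * ln K)) as Hc. simpl in Hc. unfold R_dist in Hc.
    rewrite exp_0, Rminus_0_r in Hc. apply Hc. repeat split; auto.
Qed.

Lemma inf_exists (E : R -> Prop) (lb : R) :
  (exists x, E x) -> (forall x, E x -> lb <= x) ->
  { r | lb <= r /\ (forall x, E x -> r <= x) /\ (forall t, r < t -> exists x, E x /\ x < t) }.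
Proof.
  intros Hne Hlb.
  destruct (completeness (fun y => E (- y))) as [l [Hub Hleast]].
  - exists (- lb). intros y Hy. apply Hlb in Hy. lra.
  - destruct Hne as [x Hx]. exists (- x). rewrite Ropp_involutive. auto.
  - exists (- l). split; [|split].
    + assert (l <= - lb) by (apply Hleast; intros y Hy; apply Hlb in Hy; lra). lra.
    + intros x Hx. assert (- x <= l) by (apply Hub; rewrite Ropp_involutive; auto). lra.
    + intros t Ht. apply NNPP; intros Hno.
      assert (l <= - t); [|lra].
      apply Hleast. intros y Hy. destruct (Rlt_le_dec (- y) t); [|lra].
      exfalso; apply Hno; eauto.
Qed.

(** ** The growth rate [inf_m (mass A^m)^(1/m)] *)

Definition root_masses (n : nat) (A : nat -> nat -> R) (x : R) : Prop :=
  exists m, (1 <= m)%nat /\ x = rootn m (mass n A m).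

Lemma root_masses_inhabited n A : exists x, root_masses n A x.
Proof. exists (rootn 1 (mass n A 1)), 1%nat. auto. Qed.

Lemma root_masses_nonneg n A x : root_masses n A x -> 0 <= x.
Proof. intros [m [_ ->]]. apply rootn_nonneg. Qed.

Definition growth_rate (n : nat) (A : nat -> nat -> R) : R :=
  proj1_sig (inf_exists (root_masses n A) 0
    (root_masses_inhabited n A) (root_masses_nonneg n A)).

Section GrowthRate.
Variable n : nat.
Variable A : nat -> nat -> R.

Lemma growth_rate_spec :
  0 <= growth_rate n A /\
  (forall m, (1 <= m)%nat -> growth_rate n A <= rootn m (mass n A m)) /\
  (forall t, growth_rate n A < t -> exists k, (1 <= k)%nat /\ rootn k (mass n A k) < t).
Proof.
  unfold growth_rate. destruct (inf_exists _ _ _ _) as [r [Hr0 [Hlow Happrox]]]. simpl.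
  split; [|split]; auto.
  - intros m Hm. apply Hlow. exists m; auto.
  - intros t Ht. destruct (Happrox t Ht) as [x [[k [Hk ->]] Hx]]. eauto.
Qed.

Lemma growth_rate_nonneg : 0 <= growth_rate n A.
Proof. apply growth_rate_spec. Qed.

Lemma growth_rate_le m : (1 <= m)%nat -> growth_rate n A <= rootn m (mass n A m).
Proof. apply growth_rate_spec. Qed.

Hypothesis A_nonneg : forall i j, (i < n)%nat -> (j < n)%nat -> 0 <= A i j.

Lemma growth_rate_approx t :
  growth_rate n A < t -> exists k, (1 <= k)%nat /\ mass n A k < t ^ k.
Proof.
  intros Ht. destruct (proj2 (proj2 growth_rate_spec) t Ht) as [k [Hk Hlt]].
  exists k. split; auto. pose proof growth_rate_nonneg.
  apply rootn_lt_iff; auto; [apply mass_nonneg; auto|lra].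
Qed.

Lemma growth_rate_pow_le m : (1 <= n)%nat -> growth_rate n A ^ m <= mass n A m.
Proof.
  intros Hn. destruct m as [|m].
  - rewrite mass_0; auto. simpl. apply (le_INR 1); auto.
  - destruct (Rlt_le_dec (mass n A (S m)) (growth_rate n A ^ S m)) as [Hlt|]; auto.
    apply rootn_lt_iff in Hlt; [|lia|apply mass_nonneg; auto|apply growth_rate_nonneg].
    pose proof (growth_rate_le (S m) ltac:(lia)). lra.
Qed.

Lemma mass_le_geometric k t : (1 <= k)%nat -> 0 < t -> mass n A k <= t ^ k ->
  exists K, 0 < K /\ forall m, mass n A m <= K * t ^ m.
Proof.
  intros Hk Ht Hmk.
  set (B := sumR k (fun s => mass n A s / t ^ s)).
  assert (Hterm : forall s, 0 <= mass n A s / t ^ s)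
    by (intros; apply Rmult_le_pos; [apply mass_nonneg; auto|]; left;
        apply Rinv_0_lt_compat, pow_lt; auto).
  assert (HB : 0 <= B) by (apply sumR_nonneg; auto).
  exists (B + 1). split; [lra|]. intros m.
  induction m as [m IH] using lt_wf_ind.
  assert (Htm : 0 < t ^ m) by (apply pow_lt; auto).
  destruct (Nat.lt_ge_cases m k) as [Hmk'|Hkm].
  - assert (mass n A m / t ^ m <= B)
      by (apply (sumR_term k (fun s => mass n A s / t ^ s)); auto).
    replace (mass n A m) with (mass n A m / t ^ m * t ^ m) by (field; lra). nra.
  - replace m with (k + (m - k))%nat by lia. rewrite pow_add.
    eapply Rle_trans; [apply mass_submult; auto|].
    pose proof (IH (m - k)%nat ltac:(lia)).
    pose proof (mass_nonneg n A A_nonneg k). pose proof (mass_nonneg n A A_nonneg (m - k)).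
    assert (0 < t ^ (m - k)) by (apply pow_lt; auto).
    apply Rle_trans with (t ^ k * ((B + 1) * t ^ (m - k))); [|lra].
    apply Rmult_le_compat; auto.
Qed.

Lemma mass_growth t : growth_rate n A < t -> exists K, 0 < K /\ forall m, mass n A m <= K * t ^ m.
Proof.
  intros Ht. destruct (growth_rate_approx t Ht) as [k [Hk Hlt]].
  pose proof growth_rate_nonneg.
  apply (mass_le_geometric k); auto; lra.
Qed.

Lemma root_eventually_below (L : nat -> R) C eps : 0 < C -> 0 < eps ->
  (forall m, (1 <= m)%nat -> 0 <= L m <= C * mass n A m) ->
  exists N, forall m, (N <= m)%nat -> rootn m (L m) <= growth_rate n A + eps.
Proof.
  intros HC Heps HL. pose proof growth_rate_nonneg as Hr0.
  set (t := growth_rate n A + eps / 2).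
  destruct (mass_growth t ltac:(unfold t; lra)) as [K [HK HmK]].
  destruct (Rpower_inv_lim (C * K) (eps / (2 * t))) as [N HN];
    [nra|apply Rdiv_lt_0_compat; unfold t; lra|].
  exists (Nat.max N 1). intros m Hm.
  destruct (HL m ltac:(lia)) as [HL0 HLC].
  assert (Hroot : rootn m (L m) <= Rpower (C * K) (/ INR m) * t).
  { apply rootn_bound; [lia|nra|unfold t; lra|auto|].
    apply Rle_trans with (C * (K * t ^ m)); [|lra].
    apply Rle_trans with (C * mass n A m); [auto|apply Rmult_le_compat_l; [lra|apply HmK]]. }
  specialize (HN m ltac:(lia)). apply Rabs_def2 in HN.
  assert (Hfac : Rpower (C * K) (/ INR m) * t <= (1 + eps / (2 * t)) * t)
    by (apply Rmult_le_compat_r; [unfold t|]; lra).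
  replace ((1 + eps / (2 * t)) * t) with (t + eps / 2) in Hfac by (unfold t; field; lra).
  unfold t in *; lra.
Qed.

Lemma root_frequently_above (L : nat -> R) c eps : 0 < c -> 0 < eps ->
  (forall m, (1 <= m)%nat -> c * mass n A m <= L m) ->
  forall N, exists m, (N <= m)%nat /\ growth_rate n A - eps <= rootn m (L m).
Proof.
  intros Hc Heps HL N. pose proof growth_rate_nonneg as Hr0.
  set (r := growth_rate n A) in *.
  set (d := eps / (r + 1)).
  assert (Hd : 0 < d) by (apply Rdiv_lt_0_compat; lra).
  assert (Hdr : d * r <= eps).
  { unfold d. apply (Rmult_le_reg_r (r + 1)); [lra|].
    replace (eps / (r + 1) * r * (r + 1)) with (eps * r) by (field; lra). nra. }
  destruct (Rpower_inv_lim c d Hc Hd) as [N0 HN0].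
  set (m := Nat.max N (Nat.max N0 1)). exists m. split; [lia|].
  pose proof (mass_nonneg n A A_nonneg m) as Hmass.
  assert (Hmono : rootn m (c * mass n A m) <= rootn m (L m))
    by (apply rootn_mono; [lia|split; [nra|apply HL; lia]]).
  rewrite rootn_mul in Hmono by (auto; lia).
  pose proof (growth_rate_le m ltac:(lia)) as Hle. fold r in Hle.
  specialize (HN0 m ltac:(lia)). apply Rabs_def2 in HN0.
  assert (0 < Rpower c (/ INR m)) by apply exp_pos.
  nra.
Qed.

Lemma limsup_root_comparable (L : nat -> R) c C : 0 < c -> 0 < C ->
  (forall m, (1 <= m)%nat -> c * mass n A m <= L m <= C * mass n A m) ->
  limsup_seq (fun m => rootn m (L m)) (growth_rate n A).
Proof.
  intros Hc HC HL eps Heps. split.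
  - apply (root_eventually_below L C); auto. intros m Hm.
    pose proof (mass_nonneg n A A_nonneg m). destruct (HL m Hm). split; [nra|auto].
  - apply (root_frequently_above L c); auto. intros m Hm. apply HL; auto.
Qed.

End GrowthRate.

(** ** Complex eigenvalues are bounded by the growth rate *)

Lemma Cmod_nonneg a : 0 <= Cmod a.
Proof. unfold Cmod; apply sqrt_pos. Qed.

Lemma Cmod_pos a : a <> (0, 0) -> 0 < Cmod a.
Proof.
  destruct a as [x y]. intros Hne. unfold Cmod; simpl. apply sqrt_lt_R0.
  destruct (Req_dec x 0) as [->|]; destruct (Req_dec y 0) as [->|]; [easy| nra ..].
Qed.

Lemma Cmod_mul a b : Cmod (Cmul a b) = Cmod a * Cmod b.
Proof.
  destruct a as [a1 a2], b as [b1 b2]; unfold Cmod, Cmul; simpl.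
  rewrite <- sqrt_mult by nra. f_equal. ring.
Qed.

Lemma Cmod_scal c x y : 0 <= c -> Cmod (c * x, c * y) = c * Cmod (x, y).
Proof.
  intros. unfold Cmod; simpl.
  replace (c * x * (c * x) + c * y * (c * y)) with ((c * c) * (x * x + y * y)) by ring.
  rewrite sqrt_mult, sqrt_square by nra. reflexivity.
Qed.

Lemma Cmod_triang x1 x2 y1 y2 : Cmod (x1 + y1, x2 + y2) <= Cmod (x1, x2) + Cmod (y1, y2).
Proof.
  unfold Cmod; simpl.
  pose proof (sqrt_pos (x1 * x1 + x2 * x2)); pose proof (sqrt_pos (y1 * y1 + y2 * y2)).
  pose proof (sqrt_sqrt (x1 * x1 + x2 * x2) ltac:(nra)).
  pose proof (sqrt_sqrt (y1 * y1 + y2 * y2) ltac:(nra)).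
  set (a := sqrt (x1 * x1 + x2 * x2)) in *. set (b := sqrt (y1 * y1 + y2 * y2)) in *.
  (* Cauchy-Schwarz: x.y <= |x| |y| *)
  assert (Hcs : x1 * y1 + x2 * y2 <= a * b).
  { destruct (Rle_lt_dec (x1 * y1 + x2 * y2) 0); [nra|].
    apply Rsqr_incr_0_var; [|nra]. unfold Rsqr.
    pose proof (pow2_ge_0 (x1 * y2 - x2 * y1)). nra. }
  rewrite <- (sqrt_square (a + b)) by lra. apply sqrt_le_1_alt. nra.
Qed.

Lemma Cmod_sum d f g : Cmod (sumR d f, sumR d g) <= sumR d (fun j => Cmod (f j, g j)).
Proof.
  induction d as [|d IH]; simpl.
  - unfold Cmod; simpl. rewrite Rmult_0_l, Rplus_0_l, sqrt_0. lra.
  - eapply Rle_trans; [apply Cmod_triang|lra].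
Qed.

Section EigenvalueBound.
Variable n : nat.
Variable A : nat -> nat -> R.
Hypothesis A_nonneg : forall i j, (i < n)%nat -> (j < n)%nat -> 0 <= A i j.
Variable lam : R * R.
Variable v : nat -> R * R.
Hypothesis v_eigen : forall i, (i < n)%nat ->
  (sumR n (fun j => A i j * fst (v j)), sumR n (fun j => A i j * snd (v j))) = Cmul lam (v i).

(** Taking moduli, [|v|] is a subinvariant vector: [|lam| |v| <= A |v|]... *)
Lemma eigen_modulus_subinvariant i : (i < n)%nat ->
  Cmod lam * Cmod (v i) <= sumR n (fun j => A i j * Cmod (v j)).
Proof.
  intros Hi. rewrite <- Cmod_mul, <- (v_eigen i Hi).
  eapply Rle_trans; [apply Cmod_sum|]. apply sumR_le; intros j Hj.
  rewrite Cmod_scal by auto. destruct (v j); apply Rle_refl.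
Qed.

Lemma eigen_modulus_iterate m i : (i < n)%nat ->
  Cmod lam ^ m * Cmod (v i) <= sumR n (fun j => Apow n A m i j * Cmod (v j)).
Proof.
  revert i; induction m as [|m IH]; intros i Hi; simpl.
  - rewrite sumR_delta_l; auto. lra.
  - rewrite (sumR_ext _ _ (fun j => sumR n (fun k => A i k * (Apow n A m k j * Cmod (v j)))))
      by (intros; rewrite <- sumR_scal_r; apply sumR_ext; intros; ring).
    rewrite sumR_swap.
    apply Rle_trans with (Cmod lam ^ m * sumR n (fun k => A i k * Cmod (v k))).
    + replace (Cmod lam * Cmod lam ^ m * Cmod (v i))
        with (Cmod lam ^ m * (Cmod lam * Cmod (v i))) by ring.
      apply Rmult_le_compat_l; [apply pow_le, Cmod_nonneg|].
      apply eigen_modulus_subinvariant; auto.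
    + rewrite <- sumR_scal. apply sumR_le; intros k Hk. rewrite sumR_scal.
      rewrite <- Rmult_assoc, (Rmult_comm _ (A i k)), Rmult_assoc.
      apply Rmult_le_compat_l; auto.
Qed.

Lemma eigen_modulus_pow_le_mass m :
  (exists i, (i < n)%nat /\ v i <> (0, 0)) -> Cmod lam ^ m <= mass n A m.
Proof.
  intros [i0 [Hi0 Hv0]].
  set (W := sumR n (fun j => Cmod (v j))).
  assert (HW : 0 < W).
  { apply Rlt_le_trans with (Cmod (v i0)); [apply Cmod_pos; auto|].
    apply (sumR_term n (fun j => Cmod (v j))); auto. intros; apply Cmod_nonneg. }
  apply (Rmult_le_reg_r W); auto. unfold W at 1. rewrite <- sumR_scal.
  eapply Rle_trans; [apply sumR_le; intros; apply eigen_modulus_iterate; auto|].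
  unfold mass. rewrite <- sumR_scal_r. apply sumR_le; intros i Hi.
  unfold row_mass. rewrite <- sumR_scal_r. apply sumR_le; intros j Hj.
  apply Rmult_le_compat_l; [apply Apow_nonneg; auto|].
  apply (sumR_term n (fun j => Cmod (v j))); auto. intros; apply Cmod_nonneg.
Qed.

End EigenvalueBound.

Lemma eigenvalue_le_growth_rate n A lam :
  (forall i j, (i < n)%nat -> (j < n)%nat -> 0 <= A i j) ->
  is_eigenvalue n A lam -> Cmod lam <= growth_rate n A.
Proof.
  intros A_nonneg [v [Hv0 Hv]].
  destruct (Rle_lt_dec (Cmod lam) (growth_rate n A)) as [|Hlt]; auto.
  destruct (growth_rate_approx n A A_nonneg _ Hlt) as [k [Hk Hmass]].
  pose proof (eigen_modulus_pow_le_mass n A A_nonneg lam v Hv k Hv0). lra.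
Qed.

Definition strictly_increasing (f : nat -> nat) : Prop := forall k, (f k < f (S k))%nat.

Lemma strictly_increasing_ge f : strictly_increasing f -> forall k, (k <= f k)%nat.
Proof. intros Hf k; induction k; [lia|]. specialize (Hf k). lia. Qed.

Lemma strictly_increasing_comp f g :
  strictly_increasing f -> strictly_increasing g -> strictly_increasing (fun k => f (g k)).
Proof.
  intros Hf Hg k.
  assert (Hmono : forall a b, (a < b)%nat -> (f a < f b)%nat).
  { intros a b Hab. induction Hab; [apply Hf|specialize (Hf m); lia]. }
  apply Hmono, Hg.
Qed.

Lemma cv_harmonic (v : nat -> R) a : (forall k, Rabs (v k - a) <= / INR (S k)) -> Un_cv v a.
Proof.
  intros H eps He.
  destruct (INR_unbounded (/ eps)) as [N HN]. exists N. intros k Hk.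
  unfold R_dist. eapply Rle_lt_trans; [apply H|].
  assert (INR N <= INR (S k)) by (apply le_INR; lia).
  assert (0 < / eps) by (apply Rinv_0_lt_compat; auto).
  rewrite <- (Rinv_inv eps). apply Rinv_lt_contravar; [apply Rmult_lt_0_compat|]; lra.
Qed.

Lemma cv_subseq v l f : Un_cv v l -> strictly_increasing f -> Un_cv (fun k => v (f k)) l.
Proof.
  intros H Hf eps He. destruct (H eps He) as [N HN]. exists N. intros k Hk. apply HN.
  pose proof (strictly_increasing_ge f Hf k). lia.
Qed.

Lemma cv_const c : Un_cv (fun _ => c) c.
Proof. intros eps He; exists 0%nat; intros; unfold R_dist; rewrite Rminus_diag, Rabs_R0; auto. Qed.

Lemma cv_sumR d (v : nat -> nat -> R) (l : nat -> R) :
  (forall j, (j < d)%nat -> Un_cv (fun k => v k j) (l j)) ->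
  Un_cv (fun k => sumR d (v k)) (sumR d l).
Proof.
  induction d as [|d IH]; intros H; simpl.
  - apply cv_const.
  - apply CV_plus; [apply IH; intros; apply H|apply H]; lia.
Qed.

Lemma bounded_subseq (u : nat -> R) : (forall k, 0 <= u k <= 1) ->
  exists f l, strictly_increasing f /\ Un_cv (fun k => u (f k)) l.
Proof.
  intros Hu.
  destruct (Bolzano_Weierstrass u (fun c => 0 <= c <= 1) (compact_P3 0 1) Hu) as [l Hl].
  assert (Hsel : forall N k : nat, exists p, (N <= p)%nat /\ Rabs (u p - l) <= / INR (S k)).
  { intros N k. assert (Hp : 0 < / INR (S k)) by (apply Rinv_0_lt_compat, lt_0_INR; lia).
    destruct (Hl (fun y => Rabs (y - l) < / INR (S k)) N) as [p [Hp1 Hp2]];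
      [exists (mkposreal _ Hp); intros y Hy; exact Hy|].
    exists p. split; [auto|lra]. }
  set (sel := fun N k => proj1_sig (constructive_indefinite_description _ (Hsel N k))).
  assert (Hs : forall N k, (N <= sel N k)%nat /\ Rabs (u (sel N k) - l) <= / INR (S k))
    by (intros; unfold sel; destruct (constructive_indefinite_description _ _); auto).
  set (f := fix f k := match k with O => sel O O | S k' => sel (S (f k')) (S k') end).
  exists f, l. split.
  - intros k. simpl. destruct (Hs (S (f k)) (S k)). lia.
  - apply cv_harmonic. intros k. destruct k; apply Hs.
Qed.

Lemma bounded_vec_subseq (x : nat -> nat -> R) d : (forall k i, 0 <= x k i <= 1) ->
  exists f l, strictly_increasing f /\ forall i, (i < d)%nat -> Un_cv (fun k => x (f k) i) (l i).
Proof.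
  intros Hx. induction d as [|d IH].
  - exists (fun k => k), (fun _ => 0). split; [intros k; lia|intros; lia].
  - destruct IH as [f [l [Hf Hl]]].
    destruct (bounded_subseq (fun k => x (f k) d)) as [g [ld [Hg Hgl]]]; [intros; apply Hx|].
    exists (fun k => f (g k)), (fun i => if Nat.eqb i d then ld else l i).
    split; [apply strictly_increasing_comp; auto|].
    intros i Hi. destruct (Nat.eqb_spec i d) as [->|]; auto.
    apply (cv_subseq (fun k => x (f k) i)); auto. apply Hl. lia.
Qed.

(** ** A Perron eigenvector for the growth rate *)

(** As [t] decreases to the growth rate its mass blows up, and its
    normalization becomes an approximate eigenvector. *)
Definition resolvent_vec (n : nat) (A : nat -> nat -> R) (t : R) (M i : nat) : R :=
  sumR M (fun m => row_mass n A m i / t ^ S m).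
Definition resolvent_mass (n : nat) (A : nat -> nat -> R) (t : R) (M : nat) : R :=
  sumR M (fun m => mass n A m / t ^ S m).

Lemma geometric_sum r t M : 0 < t ->
  (t - r) * sumR M (fun m => r ^ m / t ^ S m) = 1 - (r / t) ^ M.
Proof.
  intros Ht. induction M as [|M IH]; cbn [sumR]; [simpl; lra|].
  rewrite Rmult_plus_distr_l, IH. unfold Rdiv.
  rewrite !Rpow_mult_distr, !pow_inv. simpl pow.
  assert (0 < t ^ M) by (apply pow_lt; auto). field. lra.
Qed.

Section PerronEigenvector.
Variable n : nat.
Variable A : nat -> nat -> R.
Hypothesis A_nonneg : forall i j, (i < n)%nat -> (j < n)%nat -> 0 <= A i j.
Hypothesis n_pos : (1 <= n)%nat.

Let rho := growth_rate n A.

Lemma resolvent_vec_nonneg t M i : 0 < t -> (i < n)%nat -> 0 <= resolvent_vec n A t M i.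
Proof.
  intros. apply sumR_nonneg; intros. apply Rmult_le_pos; [apply row_mass_nonneg; auto|].
  left; apply Rinv_0_lt_compat, pow_lt; auto.
Qed.

Lemma resolvent_vec_sum t M : sumR n (resolvent_vec n A t M) = resolvent_mass n A t M.
Proof.
  unfold resolvent_vec, resolvent_mass, mass. rewrite sumR_swap.
  apply sumR_ext; intros. unfold Rdiv. rewrite sumR_scal_r. reflexivity.
Qed.

Lemma resolvent_mass_mono t M M' : 0 < t -> (M <= M')%nat ->
  resolvent_mass n A t M <= resolvent_mass n A t M'.
Proof.
  intros Ht HM. induction HM as [|M' HM IH]; [lra|]. unfold resolvent_mass in *. cbn [sumR].
  assert (0 <= mass n A M' / t ^ S M'); [|lra].
  apply Rmult_le_pos; [apply mass_nonneg; auto|left; apply Rinv_0_lt_compat, pow_lt; auto].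
Qed.

(** Telescoping: [(t - A) R_M 1 = 1 - A^M 1 / t^M]. *)
Lemma resolvent_residual t M i : 0 < t -> (i < n)%nat ->
  t * resolvent_vec n A t M i - sumR n (fun j => A i j * resolvent_vec n A t M j)
  = 1 - row_mass n A M i / t ^ M.
Proof.
  intros Ht Hi. unfold resolvent_vec.
  rewrite (sumR_ext _ (fun j => A i j * _)
             (fun j => sumR M (fun m => A i j * row_mass n A m j / t ^ S m)))
    by (intros; rewrite <- sumR_scal; apply sumR_ext; intros; unfold Rdiv; ring).
  rewrite sumR_swap, <- sumR_scal, <- sumR_minus.
  rewrite (sumR_ext _ _ (fun m => row_mass n A m i / t ^ m - row_mass n A (S m) i / t ^ S m)).
  - rewrite telescope, row_mass_0 by auto. simpl. field. apply pow_nonzero. lra.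
  - intros m _. rewrite row_mass_S by auto. unfold Rdiv. rewrite <- sumR_scal_r. simpl.
    assert (0 < t ^ m) by (apply pow_lt; auto). field. lra.
Qed.

(** Since [mass A^m >= rho^m], the resolvent mass dominates a geometric series. *)
Lemma resolvent_mass_ge_geometric t M : 0 < t ->
  sumR M (fun m => rho ^ m / t ^ S m) <= resolvent_mass n A t M.
Proof.
  intros Ht. apply sumR_le; intros m _. apply Rmult_le_compat_r.
  - left; apply Rinv_0_lt_compat, pow_lt; auto.
  - apply growth_rate_pow_le; auto.
Qed.

Lemma resolvent_blowup K d : 0 < K -> 0 < d -> exists t M,
  rho < t <= rho + d /\ K <= resolvent_mass n A t M /\ mass n A M <= t ^ M.
Proof.
  intros HK Hd. pose proof (growth_rate_nonneg n A) as Hr0. fold rho in Hr0.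
  set (d' := Rmin d (/ (2 * K))).
  assert (Hd' : 0 < d') by (apply Rmin_glb_lt; auto; apply Rinv_0_lt_compat; lra).
  assert (Hd'd : d' <= d) by apply Rmin_l.
  assert (HdK : d' * (2 * K) <= 1).
  { apply (Rmult_le_reg_r (/ (2 * K))); [apply Rinv_0_lt_compat; lra|].
    rewrite Rmult_assoc, Rinv_r, Rmult_1_l, Rmult_1_r by lra. apply Rmin_r. }
  set (t := rho + d'). assert (Ht : 0 < t) by (unfold t; lra).
  destruct (pow_lt_1_zero (rho / t)) with (y := / 2) as [M1 HM1]; [|lra|].
  { rewrite Rabs_right; [apply (Rmult_lt_reg_r t); auto; unfold Rdiv;
      rewrite Rmult_assoc, Rinv_l by lra; unfold t; lra|].
    apply Rle_ge, Rmult_le_pos; [auto|left; apply Rinv_0_lt_compat; auto]. }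
  destruct (growth_rate_approx n A A_nonneg t ltac:(unfold t, rho in *; lra)) as [k [Hk Hmk]].
  exists t, (S M1 * k)%nat. split; [split; unfold t; lra|].
  split.
  - eapply Rle_trans; [|apply resolvent_mass_mono; [auto|]]; [|instantiate (1 := M1); nia].
    eapply Rle_trans; [|apply resolvent_mass_ge_geometric; auto].
    specialize (HM1 M1 (le_n _)). apply Rabs_def2 in HM1.
    pose proof (geometric_sum rho t M1 Ht) as Hgeo.
    replace (t - rho) with d' in Hgeo by (unfold t; ring).
    set (S := sumR M1 _) in *. nra.
  - eapply Rle_trans; [apply mass_pow; auto|].
    rewrite Nat.mul_comm, pow_mult. apply pow_incr. split; [apply mass_nonneg|]; auto; lra.
Qed.

Lemma resolvent_residual_bound t M i : 0 < t -> (i < n)%nat -> mass n A M <= t ^ M ->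
  0 <= t * resolvent_vec n A t M i - sumR n (fun j => A i j * resolvent_vec n A t M j) <= 1.
Proof.
  intros Ht Hi HM. rewrite resolvent_residual by auto.
  pose proof (row_mass_nonneg n A A_nonneg M i Hi).
  pose proof (row_mass_le_mass n A A_nonneg M i Hi).
  assert (HtM : 0 < t ^ M) by (apply pow_lt; auto).
  assert (0 <= row_mass n A M i / t ^ M <= 1); [|lra].
  split; [apply Rmult_le_pos; [|left; apply Rinv_0_lt_compat]; auto|].
  apply (Rmult_le_reg_r (t ^ M)); auto. unfold Rdiv. rewrite Rmult_assoc, Rinv_l; lra.
Qed.

(** For every [eps > 0], a probability vector [x] with [|t x - A x| <= eps] for some
    [t] in [(rho, rho + eps]]: the normalized truncated resolvent. *)
Lemma approx_eigenvector eps : 0 < eps -> exists t x,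
  rho < t <= rho + eps /\ (forall i, 0 <= x i <= 1) /\ sumR n x = 1 /\
  forall i, (i < n)%nat -> Rabs (t * x i - sumR n (fun j => A i j * x j)) <= eps.
Proof.
  intros Heps.
  destruct (resolvent_blowup (/ eps) eps) as [t [M [Ht [Hblow HmM]]]];
    [apply Rinv_0_lt_compat; auto|auto|].
  assert (Ht0 : 0 < t) by (pose proof (growth_rate_nonneg n A) as Hr0; fold rho in Hr0; lra).
  set (s := resolvent_mass n A t M) in *.
  assert (Hs : 0 < s) by (apply Rlt_le_trans with (/ eps); [apply Rinv_0_lt_compat|]; auto).
  set (x := fun i => if Nat.ltb i n then resolvent_vec n A t M i / s else 0).
  assert (Hx : forall j, (j < n)%nat -> x j = resolvent_vec n A t M j / s)
    by (intros j Hj; unfold x; destruct (Nat.ltb_spec j n); [auto|lia]).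
  exists t, x. split; [auto|split; [|split]].
  - intros i. unfold x. destruct (Nat.ltb_spec i n) as [Hi|]; [|lra].
    pose proof (resolvent_vec_nonneg t M i Ht0 Hi).
    assert (resolvent_vec n A t M i <= s).
    { unfold s. rewrite <- resolvent_vec_sum.
      apply (sumR_term n (resolvent_vec n A t M)); auto. intros; apply resolvent_vec_nonneg; auto. }
    split; [apply Rmult_le_pos; [|left; apply Rinv_0_lt_compat]; auto|].
    apply (Rmult_le_reg_r s); auto. unfold Rdiv. rewrite Rmult_assoc, Rinv_l; lra.
  - rewrite (sumR_ext _ _ _ Hx). unfold Rdiv. rewrite sumR_scal_r, resolvent_vec_sum.
    apply Rinv_r. lra.
  - intros i Hi.
    rewrite (sumR_ext _ (fun j => A i j * x j) (fun j => A i j * resolvent_vec n A t M j * / s))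
      by (intros j Hj; rewrite Hx by auto; unfold Rdiv; ring).
    rewrite sumR_scal_r, Hx by auto.
    replace (t * (resolvent_vec n A t M i / s)
             - sumR n (fun j => A i j * resolvent_vec n A t M j) * / s)
      with ((t * resolvent_vec n A t M i
             - sumR n (fun j => A i j * resolvent_vec n A t M j)) / s) by (field; lra).
    pose proof (resolvent_residual_bound t M i Ht0 Hi HmM).
    rewrite Rabs_right by (apply Rle_ge, Rmult_le_pos; [lra|left; apply Rinv_0_lt_compat; auto]).
    apply Rle_trans with (/ s); [unfold Rdiv; rewrite <- (Rmult_1_l (/ s)) at 2;
      apply Rmult_le_compat_r; [left; apply Rinv_0_lt_compat|]; lra|].
    rewrite <- (Rinv_inv eps). apply Rinv_le_contravar; [apply Rinv_0_lt_compat|]; auto.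
Qed.

(** The Perron eigenvector: a limit point of approximate eigenvectors. *)
Theorem perron_eigenvector : exists z : nat -> R, sumR n z = 1 /\
  forall i, (i < n)%nat -> sumR n (fun j => A i j * z j) = rho * z i.
Proof.
  assert (Hk : forall k, 0 < / INR (S k)) by (intros; apply Rinv_0_lt_compat, lt_0_INR; lia).
  destruct (functional_choice (fun k (tx : R * (nat -> R)) =>
    rho < fst tx <= rho + / INR (S k) /\ (forall i, 0 <= snd tx i <= 1) /\ sumR n (snd tx) = 1 /\
    forall i, (i < n)%nat ->
      Rabs (fst tx * snd tx i - sumR n (fun j => A i j * snd tx j)) <= / INR (S k)))
    as [tx Htx].
  { intros k. destruct (approx_eigenvector _ (Hk k)) as [t [x Hx]]. exists (t, x); exact Hx. }
  set (t := fun k => fst (tx k)). set (x := fun k => snd (tx k)).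
  destruct (bounded_vec_subseq x n) as [f [z [Hf Hz]]]; [intros; apply Htx|].
  assert (Hshrink : forall k, / INR (S (f k)) <= / INR (S k)).
  { intros k. pose proof (strictly_increasing_ge f Hf k).
    apply Rinv_le_contravar; [apply lt_0_INR; lia|apply le_INR; lia]. }
  exists z. split.
  - apply (UL_sequence (fun k => sumR n (x (f k)))); [apply cv_sumR; auto|].
    intros e He; exists 0%nat; intros k _. unfold R_dist, x.
    destruct (Htx (f k)) as [_ [_ [-> _]]]. rewrite Rminus_diag, Rabs_R0. auto.
  - intros i Hi.
    assert (Ht : Un_cv (fun k => t (f k)) rho).
    { apply cv_harmonic. intros k. specialize (Hshrink k).
      destruct (Htx (f k)) as [Hrange _]. unfold t. rewrite Rabs_right; lra. }
    assert (Hlim : Un_cv (fun k => t (f k) * x (f k) i - sumR n (fun j => A i j * x (f k) j))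
                         (rho * z i - sumR n (fun j => A i j * z j))).
    { apply CV_minus; [apply CV_mult; auto|]. apply cv_sumR; intros j Hj.
      apply CV_mult; [apply cv_const|apply Hz; auto]. }
    assert (Hzero : Un_cv (fun k => t (f k) * x (f k) i - sumR n (fun j => A i j * x (f k) j)) 0).
    { apply cv_harmonic. intros k. rewrite Rminus_0_r.
      eapply Rle_trans; [apply Htx; auto|apply Hshrink]. }
    pose proof (UL_sequence _ _ _ Hlim Hzero). lra.
Qed.

End PerronEigenvector.

Theorem growth_rate_spectral_radius n A : (1 <= n)%nat ->
  (forall i j, (i < n)%nat -> (j < n)%nat -> 0 <= A i j) ->
  is_spectral_radius n A (growth_rate n A).
Proof.
  intros Hn A_nonneg. split; [|intros lam; apply eigenvalue_le_growth_rate; auto].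
  destruct (perron_eigenvector n A A_nonneg Hn) as [z [Hsum Heig]].
  exists (growth_rate n A, 0). split.
  - exists (fun j => (z j, 0)). split.
    + apply NNPP; intros Hzero.
      assert (sumR n z = sumR n (fun _ => 0)); [|rewrite sumR_zero in *; lra].
      apply sumR_ext. intros k Hk. apply NNPP; intros Hzk. apply Hzero. exists k.
      split; auto. intros He. inversion He. auto.
    + intros i Hi. unfold Cmul; simpl. rewrite Heig by auto.
      rewrite (sumR_ext _ _ (fun _ => 0)), sumR_zero by (intros; ring). f_equal; ring.
  - unfold Cmod; simpl. rewrite Rmult_0_l, Rplus_0_r.
    apply sqrt_square, growth_rate_nonneg.
Qed.

(** ** Word length on [Z^n] *)

Definition smul (c : nat) (g : vecZ) : vecZ := fun i => (Z.of_nat c * g i)%Z.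
Definition basis (j : nat) : vecZ := fun i => if Nat.eqb i j then 1%Z else 0%Z.

Lemma smul_inZn n c g : inZn n g -> inZn n (smul c g).
Proof. intros H i Hi. unfold smul. rewrite H; auto. lia. Qed.

Lemma smul_mul a b g : smul (a * b) g = smul a (smul b g).
Proof. apply functional_extensionality; intros; unfold smul. rewrite Nat2Z.inj_mul. lia. Qed.

Lemma basis_inZn n j : (j < n)%nat -> inZn n (basis j).
Proof. intros Hj i Hi. unfold basis. destruct (Nat.eqb_spec i j); [lia|auto]. Qed.

Fixpoint sumN (d : nat) (f : nat -> nat) : nat :=
  match d with O => O | S k => (sumN k f + f k)%nat end.

Lemma sumN_INR d f : INR (sumN d f) = sumR d (fun i => INR (f i)).
Proof. induction d as [|d IH]; simpl; [|rewrite plus_INR, IH]; reflexivity. Qed.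

Section Words.
Variable gens : list vecZ.

Lemma fold_sum_shift (l : list vecZ) a i :
  fold_right (fun s acc => (s i + acc)%Z) a l
  = (fold_right (fun s acc => (s i + acc)%Z) 0%Z l + a)%Z.
Proof. induction l; simpl; lia. Qed.

Lemma is_word_zero : is_word gens 0 (fun _ => 0%Z).
Proof. exists nil. repeat split; auto. intros s []. Qed.

Lemma is_word_add k1 k2 g1 g2 :
  is_word gens k1 g1 -> is_word gens k2 g2 -> is_word gens (k1 + k2) (vadd g1 g2).
Proof.
  intros [l1 [H1 [H1S H1g]]] [l2 [H2 [H2S H2g]]]. exists (l1 ++ l2). split; [|split].
  - rewrite length_app; lia.
  - intros s Hs. apply in_app_or in Hs. destruct Hs; auto.
  - intros i. unfold vadd. rewrite H1g, H2g, fold_right_app.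
    rewrite (fold_sum_shift l1 (fold_right _ 0%Z l2) i). reflexivity.
Qed.

Lemma is_word_smul c k g : is_word gens k g -> is_word gens (c * k) (smul c g).
Proof.
  intros H. induction c as [|c IH].
  - exact is_word_zero.
  - replace (S c * k)%nat with (k + c * k)%nat by lia.
    replace (smul (S c) g) with (vadd g (smul c g))
      by (apply functional_extensionality; intros; unfold smul, vadd; rewrite Nat2Z.inj_succ; lia).
    apply is_word_add; auto.
Qed.

(** Symmetry of the generating set: inverting a word letter by letter. *)
Lemma is_word_opp n k g : sym_gen_set n gens -> is_word gens k g -> is_word gens k (vopp g).
Proof.
  intros [_ [Hsym _]] [l [Hl [HlS Hg]]]. subst k.
  assert (Hinv : exists l', length l' = length l /\ (forall s, In s l' -> In s gens) /\
    forall i, fold_right (fun s acc => (s i + acc)%Z) 0%Z l'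
              = (- fold_right (fun s acc => (s i + acc)%Z) 0%Z l)%Z).
  { clear Hg. induction l as [|a l IH].
    - exists nil. split; [reflexivity|split; [intros s []|intros; simpl; lia]].
    - destruct IH as [l' [Hlen [Hin Hsum]]]; [intros; apply HlS; right; auto|].
      destruct (Hsym a) as [a' [Ha' Ha'']]; [apply HlS; left; auto|].
      exists (a' :: l'). simpl. split; [lia|split].
      + intros s [<-|Hs]; auto.
      + intros i. rewrite Hsum, Ha''. lia. }
  destruct Hinv as [l' [Hlen [Hin Hsum]]]. exists l'. repeat split; auto.
  intros i. unfold vopp. rewrite Hsum, Hg. reflexivity.
Qed.

Lemma word_length_exists g : (exists k, is_word gens k g) -> exists k, word_length gens g k.
Proof.
  intros H.
  destruct (Wf_nat.dec_inh_nat_subset_has_unique_least_element (fun k => is_word gens k g))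
    as [k [[Hk Hmin] _]]; [intros; apply classic|auto|].
  exists k. split; auto.
Qed.

End Words.

Section WordMetric.
Variable n : nat.
Variable gens : list vecZ.
Hypothesis gens_sym : sym_gen_set n gens.

Lemma basis_words_bounded : exists C, forall j, (j < n)%nat ->
  exists l, (l <= C)%nat /\ is_word gens l (basis j).
Proof.
  destruct gens_sym as [_ [_ Hgen]].
  assert (H : forall d, (d <= n)%nat -> exists C, forall j, (j < d)%nat ->
            exists l, (l <= C)%nat /\ is_word gens l (basis j)).
  { induction d as [|d IH]; intros Hd; [exists 0%nat; intros; lia|].
    destruct IH as [C HC]; [lia|].
    destruct (Hgen (basis d) (basis_inZn n d ltac:(lia))) as [l Hl].
    exists (Nat.max C l). intros j Hj. destruct (Nat.eq_dec j d) as [->|].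
    - exists l. split; [lia|auto].
    - destruct (HC j ltac:(lia)) as [l' [Hl' Hw]]. exists l'. split; [lia|auto]. }
  apply H; lia.
Qed.

Lemma is_word_coordinate c j l : is_word gens l (basis j) ->
  is_word gens (Z.abs_nat c * l) (fun i => if Nat.eqb i j then c else 0%Z).
Proof.
  intros Hl. destruct (Z_le_gt_dec 0 c).
  - replace (fun i => if Nat.eqb i j then c else 0%Z) with (smul (Z.abs_nat c) (basis j)).
    + apply is_word_smul; auto.
    + apply functional_extensionality; intros i; unfold smul, basis.
      destruct (Nat.eqb_spec i j); lia.
  - replace (fun i => if Nat.eqb i j then c else 0%Z) with (vopp (smul (Z.abs_nat c) (basis j))).
    + apply (is_word_opp gens n); auto. apply is_word_smul; auto.
    + apply functional_extensionality; intros i; unfold vopp, smul, basis.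
      destruct (Nat.eqb_spec i j); lia.
Qed.

Lemma word_length_le_l1 : exists C, (1 <= C)%nat /\ forall g, inZn n g ->
  exists K, is_word gens K g /\ (K <= C * sumN n (fun i => Z.abs_nat (g i)))%nat.
Proof.
  destruct basis_words_bounded as [C HC]. exists (S C). split; [lia|]. intros g Hg.
  set (trunc := fun d => (fun j => if Nat.ltb j d then g j else 0%Z) : vecZ).
  assert (H : forall d, (d <= n)%nat -> exists K, is_word gens K (trunc d) /\
            (K <= S C * sumN d (fun i => Z.abs_nat (g i)))%nat).
  { induction d as [|d IH]; intros Hd.
    - exists 0%nat. split; [|lia].
      replace (trunc 0%nat) with (fun _ : nat => 0%Z); [apply is_word_zero|].
      apply functional_extensionality; intros; unfold trunc; destruct (Nat.ltb_spec x 0); lia.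
    - destruct IH as [K [HK1 HK2]]; [lia|].
      destruct (HC d ltac:(lia)) as [l [Hl1 Hl2]].
      exists (K + Z.abs_nat (g d) * l)%nat. split.
      + replace (trunc (S d)) with (vadd (trunc d) (fun j => if Nat.eqb j d then g d else 0%Z)).
        * apply is_word_add; auto. apply is_word_coordinate; auto.
        * apply functional_extensionality; intros j; unfold vadd, trunc.
          destruct (Nat.ltb_spec j d), (Nat.eqb_spec j d), (Nat.ltb_spec j (S d));
            subst; try lia; auto.
      + simpl. nia. }
  destruct (H n (le_n n)) as [K [HK1 HK2]]. exists K. split; auto.
  replace g with (trunc n); auto.
  apply functional_extensionality; intros j; unfold trunc.
  destruct (Nat.ltb_spec j n); auto. rewrite Hg; auto.
Qed.

Lemma generators_bounded : exists C, 1 <= C /\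
  forall s i, In s gens -> (i < n)%nat -> Rabs (IZR (s i)) <= C.
Proof.
  clear gens_sym. induction gens as [|s0 l IH].
  - exists 1. split; [lra|intros s i []].
  - destruct IH as [C [HC1 HC]].
    assert (HN0 : 0 <= sumR n (fun i => Rabs (IZR (s0 i))))
      by (apply sumR_nonneg; intros; apply Rabs_pos).
    exists (C + sumR n (fun i => Rabs (IZR (s0 i)))). split; [lra|]. intros s i [<-|Hs] Hi.
    + pose proof (sumR_term n (fun i => Rabs (IZR (s0 i))) i (fun _ _ => Rabs_pos _) Hi). lra.
    + pose proof (HC s i Hs Hi). lra.
Qed.

Lemma word_coord_bound C k g i : (forall s, In s gens -> Rabs (IZR (s i)) <= C) ->
  is_word gens k g -> Rabs (IZR (g i)) <= INR k * C.
Proof.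
  intros HC [l [<- [HlS ->]]]. clear gens_sym.
  induction l as [|s l IH]; simpl fold_right.
  - rewrite Rabs_R0. simpl. lra.
  - rewrite plus_IZR. simpl length. rewrite S_INR.
    pose proof (HC s (HlS s (or_introl eq_refl))).
    assert (Rabs (IZR (fold_right (fun s acc => (s i + acc)%Z) 0%Z l)) <= INR (length l) * C)
      by (apply IH; intros; apply HlS; right; auto).
    pose proof (Rabs_triang (IZR (s i)) (IZR (fold_right (fun s acc => (s i + acc)%Z) 0%Z l))).
    lra.
Qed.

End WordMetric.

(** ** The domain of the iterates contains a full-rank lattice *)

Lemma pigeonhole {T : Type} (reps : list T) (f : nat -> T) : (forall j, In (f j) reps) ->
  exists i j, (i < j <= length reps)%nat /\ f i = f j.
Proof.
  intros Hf. set (L := map f (seq 0 (S (length reps)))).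
  assert (HnD : ~ NoDup L).
  { intros HN. apply (NoDup_incl_length (l' := reps)) in HN.
    - unfold L in HN. rewrite length_map, length_seq in HN. lia.
    - intros x Hx. unfold L in Hx. apply in_map_iff in Hx. destruct Hx as [j [<- _]]. apply Hf. }
  rewrite NoDup_nth with (d := f 0%nat) in HnD. apply NNPP; intros Hno. apply HnD.
  intros i j Hi Hj Hnth. unfold L in *. rewrite length_map, length_seq in Hi, Hj.
  rewrite !map_nth, !seq_nth in Hnth by auto. simpl in Hnth.
  destruct (Nat.lt_trichotomy i j) as [H|[H|H]]; auto; exfalso; apply Hno.
  - exists i, j. split; [lia|auto].
  - exists j, i. split; [lia|auto].
Qed.

Lemma factorial_multiple a q : (1 <= a <= q)%nat -> exists c, fact q = (c * a)%nat.
Proof.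
  induction q as [|q IH]; intros Ha; [lia|].
  destruct (Nat.eq_dec a (S q)) as [->|]; [exists (fact q); simpl; lia|].
  destruct IH as [c Hc]; [lia|]. exists (S q * c)%nat. simpl. rewrite Hc. lia.
Qed.

Section VirtualEndomorphism.
Variable n : nat.
Variable D : vecZ -> Prop.
Variable phi : vecZ -> vecZ.
Variable A : nat -> nat -> R.
Hypothesis phi_ve : virtual_endo n D phi.
Hypothesis A_ext : linear_extension n D phi A.

Lemma dom_smul c h : D h -> D (smul c h).
Proof.
  destruct phi_ve as [[_ Hzero Hadd _ _] _ _]. intros Hh. induction c as [|c IH].
  - exact Hzero.
  - replace (smul (S c) h) with (vadd h (smul c h)); [auto|].
    apply functional_extensionality; intros; unfold smul, vadd. rewrite Nat2Z.inj_succ. lia.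
Qed.

Lemma dom_iter_inZn m g : dom_iter n D phi m g -> inZn n g.
Proof. induction m as [|m IH]; simpl; [auto|]. intros [Hd _]. auto. Qed.

Lemma iter_inZn m g : dom_iter n D phi m g -> inZn n (Nat.iter m phi g).
Proof. destruct m; simpl; [auto|]. intros [_ H]. apply (ve_into _ _ _ phi_ve); auto. Qed.

Lemma iter_linear m g : dom_iter n D phi m g -> forall i, (i < n)%nat ->
  IZR (Nat.iter m phi g i) = sumR n (fun j => Apow n A m i j * IZR (g j)).
Proof.
  induction m as [|m IH]; intros Hd i Hi; simpl; [rewrite sumR_delta_l; auto|].
  destruct Hd as [Hd HD]. rewrite A_ext by auto.
  rewrite (sumR_ext _ _ (fun k => sumR n (fun j => A i k * Apow n A m k j * IZR (g j))))
    by (intros; rewrite IH, <- sumR_scal by auto; apply sumR_ext; intros; ring).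
  rewrite sumR_swap. apply sumR_ext; intros. rewrite sumR_scal_r. reflexivity.
Qed.

(** A finite-index subgroup contains [p Z^n] for some [p >= 1]: among the multiples
    [0 g, 1 g, ..., q g] two lie in the same coset, so [(j - i) g] is in [D] for some
    [1 <= j - i <= q], and [p = q!] works for every [g]. *)
Lemma multiples_in_domain : exists p, (1 <= p)%nat /\ forall g, inZn n g -> D (smul p g).
Proof.
  destruct phi_ve as [[_ _ Hadd Hopp [reps Hreps]] _ _].
  exists (fact (length reps)). split; [apply lt_O_fact|]. intros g Hg.
  destruct (functional_choice (fun j r => In r reps /\ D (vadd (smul j g) (vopp r))))
    as [rf Hrf]; [intros j; apply Hreps, smul_inZn; auto|].
  destruct (pigeonhole reps rf) as [i [j [Hij Heq]]]; [apply Hrf|].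
  assert (Hd : D (smul (j - i) g)).
  { destruct (Hrf i) as [_ Hi]. destruct (Hrf j) as [_ Hj].
    replace (smul (j - i) g)
      with (vadd (vadd (smul j g) (vopp (rf j))) (vopp (vadd (smul i g) (vopp (rf i))))); auto.
    apply functional_extensionality; intros x. unfold vadd, vopp, smul. rewrite Heq.
    rewrite Nat2Z.inj_sub by lia. lia. }
  destruct (factorial_multiple (j - i) (length reps)) as [c ->]; [lia|].
  rewrite smul_mul. apply dom_smul; auto.
Qed.

Lemma dom_iter_multiples p : (forall g, inZn n g -> D (smul p g)) ->
  forall m g, inZn n g -> dom_iter n D phi m (smul (p ^ m) g).
Proof.
  intros Hp m. induction m as [|m IH]; intros g Hg; [apply smul_inZn; auto|].
  replace (smul (p ^ S m) g) with (smul (p ^ m) (smul p g))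
    by (rewrite <- smul_mul; f_equal; simpl; lia).
  split; [apply IH, smul_inZn; auto|].
  replace (Nat.iter m phi (smul (p ^ m) (smul p g))) with (smul p (Nat.iter m phi (smul (p ^ m) g))).
  { apply Hp, iter_inZn, IH; auto. }
  (* [phi^m] commutes with multiplication by [p]: compare coordinates through [A^m] *)
  apply functional_extensionality; intros i. destruct (Nat.lt_ge_cases i n).
  - apply eq_IZR. unfold smul at 1. rewrite mult_IZR, !iter_linear by (auto; apply IH, smul_inZn; auto).
    rewrite <- sumR_scal. apply sumR_ext; intros. unfold smul. rewrite !mult_IZR. ring.
  - unfold smul at 1. rewrite !iter_inZn by (auto; apply IH; try apply smul_inZn; auto). lia.
Qed.

End VirtualEndomorphism.

(** ** Limsups of ratios *)

(** A family of sets [P R0] of reals, shrinking as [R0] grows, bounded above by [hi]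
    and all meeting [[lo, +oo)], has a limsup [L] in [[lo, hi]]: it is the infimum
    over [R0] of the suprema of [P R0]. *)
Lemma limsup_of_family (P : R -> R -> Prop) lo hi :
  (forall R0 x, 1 <= R0 -> P R0 x -> x <= hi) ->
  (forall R0, exists x, P R0 x /\ lo <= x) ->
  (forall R0 R1 x, R1 <= R0 -> P R0 x -> P R1 x) ->
  exists L, lo <= L <= hi /\ forall eps, 0 < eps ->
    (exists R0, forall x, P R0 x -> x <= L + eps) /\
    (forall R0, exists x, P R0 x /\ L - eps <= x).
Proof.
  intros Hhi Hlo Hmono.
  assert (HR : forall N, 1 <= INR (S N)) by (intros; apply (le_INR 1); lia).
  assert (Hsup : forall N : nat, { F | is_lub (P (INR (S N))) F }).
  { intros N. apply completeness.
    - exists hi. intros x Hx. apply (Hhi (INR (S N))); auto.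
    - destruct (Hlo (INR (S N))) as [x [Hx _]]; eauto. }
  set (F := fun N => proj1_sig (Hsup N)).
  assert (HF : forall N, is_lub (P (INR (S N))) (F N)) by (intros; unfold F; destruct (Hsup N); auto).
  assert (HFlo : forall N, lo <= F N).
  { intros N. destruct (Hlo (INR (S N))) as [x [Hx Hx']]. apply (proj1 (HF N)) in Hx. lra. }
  destruct (inf_exists (fun y => exists N, y = F N) lo) as [L [HLlo [HLle HLapprox]]];
    [exists (F 0%nat), 0%nat; auto|intros y [N ->]; auto|].
  exists L. split; [split; auto|].
  { apply Rle_trans with (F 0%nat); [apply HLle; eauto|].
    apply (proj2 (HF 0%nat)). intros x Hx. apply (Hhi (INR 1)); auto. }
  intros eps Heps. split.
  - destruct (HLapprox (L + eps)) as [y [[N ->] HN]]; [lra|].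
    exists (INR (S N)). intros x Hx. apply (proj1 (HF N)) in Hx. lra.
  - intros R0. destruct (INR_unbounded R0) as [N HN].
    assert (HLF : L <= F N) by (apply HLle; eauto).
    destruct (classic (exists x, P (INR (S N)) x /\ F N - eps < x)) as [[x [Hx Hx']]|Hno].
    + exists x. split; [|lra]. apply (Hmono (INR (S N))); auto. rewrite S_INR. lra.
    + assert (F N <= F N - eps); [|lra].
      apply (proj2 (HF N)). intros x Hx.
      destruct (Rle_lt_dec x (F N - eps)); auto. exfalso; apply Hno; eauto.
Qed.

Definition ratio_set (n : nat) (gens : list vecZ) (D : vecZ -> Prop) (phi : vecZ -> vecZ)
  (m : nat) (R0 x : R) : Prop :=
  exists g k kg, dom_iter n D phi m g /\ word_length gens g k /\
    word_length gens (Nat.iter m phi g) kg /\ R0 <= INR k /\ x = INR kg / INR k.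

Section ContractionCoefficient.
Variable n : nat.
Variable D : vecZ -> Prop.
Variable phi : vecZ -> vecZ.
Variable A : nat -> nat -> R.
Variable gens : list vecZ.
Hypothesis n_pos : (1 <= n)%nat.
Hypothesis phi_ve : virtual_endo n D phi.
Hypothesis A_ext : linear_extension n D phi A.
Hypothesis A_nonneg : forall i j, (i < n)%nat -> (j < n)%nat -> 0 <= A i j.
Hypothesis gens_sym : sym_gen_set n gens.

Variable C2 : nat.
Hypothesis C2_pos : (1 <= C2)%nat.
Hypothesis C2_bound : forall g, inZn n g ->
  exists K, is_word gens K g /\ (K <= C2 * sumN n (fun i => Z.abs_nat (g i)))%nat.
Variable CW : R.
Hypothesis CW_pos : 1 <= CW.
Hypothesis CW_bound : forall s i, In s gens -> (i < n)%nat -> Rabs (IZR (s i)) <= CW.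

Lemma word_length_le_norm g k : inZn n g -> word_length gens g k ->
  INR k <= INR C2 * sumR n (fun i => Rabs (IZR (g i))).
Proof.
  intros Hg [_ Hmin]. destruct (C2_bound g Hg) as [K [HK1 HK2]]. apply Hmin in HK1.
  rewrite <- (sumR_ext n (fun i => INR (Z.abs_nat (g i))))
    by (intros; rewrite INR_IZR_INZ, Nat2Z.inj_abs_nat, abs_IZR; reflexivity).
  rewrite <- sumN_INR, <- mult_INR. apply le_INR. lia.
Qed.

Lemma coord_le_word_length g k i : word_length gens g k -> (i < n)%nat ->
  Rabs (IZR (g i)) <= INR k * CW.
Proof. intros [Hk _] Hi. apply (word_coord_bound gens) with (i := i); auto. Qed.

Lemma ratio_upper m R0 x : 1 <= R0 -> ratio_set n gens D phi m R0 x ->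
  x <= CW * INR C2 * mass n A m.
Proof.
  intros HR0 [g [k [kg [Hd [Hk [Hkg [HRk ->]]]]]]].
  assert (Hk0 : 0 < INR k) by lra.
  pose proof (word_length_le_norm _ _ (iter_inZn n D phi phi_ve m g Hd) Hkg) as Hkg_le.
  assert (Hsum : sumR n (fun i => Rabs (IZR (Nat.iter m phi g i))) <= mass n A m * (INR k * CW)).
  { unfold mass. rewrite <- sumR_scal_r. apply sumR_le. intros i Hi.
    rewrite (iter_linear n D phi A A_ext m g Hd i Hi).
    eapply Rle_trans; [apply sumR_abs|]. unfold row_mass. rewrite <- sumR_scal_r.
    apply sumR_le. intros j Hj.
    rewrite Rabs_mult, (Rabs_right (Apow n A m i j)) by (apply Rle_ge, Apow_nonneg; auto).
    apply Rmult_le_compat_l; [apply Apow_nonneg; auto|apply (coord_le_word_length g); auto]. }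
  assert (0 <= INR C2) by apply pos_INR.
  apply (Rmult_le_reg_r (INR k)); auto. unfold Rdiv. rewrite Rmult_assoc, Rinv_l by lra.
  assert (INR C2 * sumR n (fun i => Rabs (IZR (Nat.iter m phi g i)))
          <= INR C2 * (mass n A m * (INR k * CW))) by (apply Rmult_le_compat_l; auto).
  nra.
Qed.

(** Arbitrarily large multiples [Q e_j] of a basis vector lie in the domain of
    [phi^m]: take [Q] a multiple of [p^m] with [p Z^n] inside [D]. *)
Lemma basis_multiple_in_domain m j0 R0 : (j0 < n)%nat -> exists g Q,
  dom_iter n D phi m g /\ (forall j, IZR (g j) = INR Q * delta j j0) /\
  1 <= INR Q /\ R0 * CW < INR Q.
Proof.
  intros Hj0.
  destruct (multiples_in_domain n D phi phi_ve) as [p [Hp1 Hp]].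
  destruct (INR_unbounded (R0 * CW)) as [t Ht].
  exists (smul (p ^ m) (smul (S t) (basis j0))), (p ^ m * S t)%nat. split; [|split].
  - apply (dom_iter_multiples n D phi A phi_ve A_ext p Hp), smul_inZn, basis_inZn; auto.
  - intros j. unfold smul, basis, delta. rewrite Nat.mul_comm, mult_INR, !INR_IZR_INZ.
    destruct (Nat.eqb_spec j j0); rewrite ?mult_IZR; simpl; ring.
  - assert (INR (S t) <= INR (p ^ m * S t)); [|rewrite S_INR in *; pose proof (pos_INR t); lra].
    apply le_INR. assert (1 <= p ^ m)%nat by (apply Nat.neq_0_lt_0, Nat.pow_nonzero; lia). nia.
Qed.

Lemma basis_multiple_word_bounds m i0 j0 g Q k kg : (i0 < n)%nat -> (j0 < n)%nat ->
  dom_iter n D phi m g -> (forall j, IZR (g j) = INR Q * delta j j0) ->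
  word_length gens g k -> word_length gens (Nat.iter m phi g) kg ->
  INR Q <= INR k * CW /\ INR k <= INR C2 * INR Q /\ INR Q * Apow n A m i0 j0 <= INR kg * CW.
Proof.
  intros Hi0 Hj0 Hd Hg Hk Hkg.
  assert (Hdelta : forall c, sumR n (fun j => c * delta j j0) = c)
    by (intros; apply (sumR_delta_r n (fun _ => c)); auto).
  assert (Hgz : inZn n g) by (apply (dom_iter_inZn n D phi m); auto).
  split; [|split].
  - pose proof (coord_le_word_length g k j0 Hk Hj0) as Hcoord. rewrite Hg in Hcoord.
    unfold delta in Hcoord.
    rewrite Nat.eqb_refl, Rmult_1_r, Rabs_right in Hcoord by (apply Rle_ge, pos_INR). auto.
  - eapply Rle_trans; [apply (word_length_le_norm g k); auto|].
    rewrite (sumR_ext _ _ (fun j => INR Q * delta j j0)), Hdelta; [lra|].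
    intros j Hj. rewrite Hg, Rabs_right; auto.
    apply Rle_ge, Rmult_le_pos; [apply pos_INR|unfold delta; destruct (Nat.eqb j j0); lra].
  - pose proof (coord_le_word_length _ kg i0 Hkg Hi0) as Hcoord.
    rewrite (iter_linear n D phi A A_ext m g Hd i0 Hi0) in Hcoord.
    rewrite (sumR_ext _ _ (fun j => Apow n A m i0 j0 * INR Q * delta j j0)), Hdelta in Hcoord.
    2:{ intros j Hj. rewrite Hg. unfold delta. destruct (Nat.eqb_spec j j0) as [->|]; ring. }
    assert (0 <= Apow n A m i0 j0) by (apply Apow_nonneg; auto).
    rewrite Rabs_right in Hcoord by (apply Rle_ge, Rmult_le_pos; auto; apply pos_INR). lra.
Qed.

(** Lower bound, at arbitrarily long [g]: take [g = Q e_j] with [j] the column of a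
    largest entry [a >= mass(A^m) / n^2] of [A^m]; then [|phi^m g| / |g| >= a / (CW C2)]. *)
Lemma ratio_lower m R0 : exists x, ratio_set n gens D phi m R0 x /\
  mass n A m / (INR n * INR n * CW * INR C2) <= x.
Proof.
  destruct (double_sum_le_max_entry n (Apow n A m) n_pos) as [i0 [j0 [Hi0 [Hj0 Hbig]]]].
  change (sumR n (fun i => sumR n (fun j => Apow n A m i j))) with (mass n A m) in Hbig.
  destruct (basis_multiple_in_domain m j0 R0 Hj0) as [g [Q [Hd [Hg [HQ1 HQ]]]]].
  assert (Hgz : inZn n g) by (apply (dom_iter_inZn n D phi m); auto).
  destruct gens_sym as [_ [_ Hgen]].
  destruct (word_length_exists gens g (Hgen g Hgz)) as [k Hk].
  destruct (word_length_exists gens _ (Hgen _ (iter_inZn n D phi phi_ve m g Hd))) as [kg Hkg].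
  destruct (basis_multiple_word_bounds m i0 j0 g Q k kg) as [Hk1 [Hk2 Hkg1]]; auto.
  set (a := Apow n A m i0 j0) in *.
  assert (Ha : 0 <= a) by (apply Apow_nonneg; auto).
  assert (Hn0 : 0 < INR n) by (apply lt_0_INR; lia).
  assert (HC20 : 0 < INR C2) by (apply lt_0_INR; lia).
  assert (HR0 : R0 <= INR k) by nra.
  exists (INR kg / INR k). split; [exists g, k, kg; do 4 (split; auto)|].
  assert (Hk0 : 0 < INR k) by nra.
  apply Rle_trans with (a / (CW * INR C2)).
  - apply (Rmult_le_reg_r (INR n * INR n * CW * INR C2)); [repeat apply Rmult_lt_0_compat; lra|].
    replace (mass n A m / (INR n * INR n * CW * INR C2) * (INR n * INR n * CW * INR C2))
      with (mass n A m) by (field; repeat split; lra).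
    replace (a / (CW * INR C2) * (INR n * INR n * CW * INR C2)) with (INR n * INR n * a)
      by (field; repeat split; lra). lra.
  - apply (Rmult_le_reg_r (CW * INR C2 * INR k)); [nra|].
    replace (a / (CW * INR C2) * (CW * INR C2 * INR k)) with (a * INR k) by (field; lra).
    replace (INR kg / INR k * (CW * INR C2 * INR k)) with (INR kg * CW * INR C2) by (field; lra).
    assert (a * INR k <= a * (INR C2 * INR Q)) by (apply Rmult_le_compat_l; auto).
    assert (INR Q * a * INR C2 <= INR kg * CW * INR C2) by (apply Rmult_le_compat_r; lra).
    nra.
Qed.

Lemma inner_limsup_comparable m : exists L,
  / (INR n * INR n * CW * INR C2) * mass n A m <= L <= CW * INR C2 * mass n A m /\
  inner_limsup n gens D phi m L.
Proof.
  destruct (limsup_of_family (ratio_set n gens D phi m)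
              (mass n A m / (INR n * INR n * CW * INR C2)) (CW * INR C2 * mass n A m))
    as [L [HLb HL]].
  - intros R0 x HR0 Hx. apply (ratio_upper m R0); auto.
  - intros R0. apply ratio_lower.
  - intros R0 R1 x HR [g [k [kg [Hd [Hk [Hkg [HRk Hx]]]]]]].
    exists g, k, kg. do 4 (split; auto). lra.
  - exists L. split; [unfold Rdiv in HLb; lra|].
    intros eps Heps. destruct (HL eps Heps) as [[R0 Hup] Hlow]. split.
    + exists R0. intros g k kg Hd Hk Hkg HRk. apply Hup. exists g, k, kg. do 4 (split; auto).
    + intros R1. destruct (Hlow R1) as [x [[g [k [kg [Hd [Hk [Hkg [HRk ->]]]]]]] Hx]].
      exists g, k, kg. do 4 (split; auto).
Qed.

Lemma contraction_coefficient_growth_rate :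
  contraction_coefficient n gens D phi (growth_rate n A).
Proof.
  set (c := / (INR n * INR n * CW * INR C2)). set (C := CW * INR C2).
  assert (Hn0 : 0 < INR n) by (apply lt_0_INR; lia).
  assert (HC20 : 0 < INR C2) by (apply lt_0_INR; lia).
  destruct (functional_choice (fun m L =>
    c * mass n A m <= L <= C * mass n A m /\ inner_limsup n gens D phi m L)) as [L HL].
  { intros m. destruct (inner_limsup_comparable m) as [L HL]. exists L. exact HL. }
  exists L. split; [intros m _; apply HL|].
  apply (limsup_root_comparable n A A_nonneg L c C).
  - unfold c. apply Rinv_0_lt_compat. repeat apply Rmult_lt_0_compat; lra.
  - unfold C. apply Rmult_lt_0_compat; lra.
  - intros m _. apply HL.
Qed.

End ContractionCoefficient.

Theorem contraction_coefficient_is_growth_rate n D phi A gens : (1 <= n)%nat ->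
  virtual_endo n D phi -> linear_extension n D phi A ->
  (forall i j, (i < n)%nat -> (j < n)%nat -> 0 <= A i j) ->
  sym_gen_set n gens -> contraction_coefficient n gens D phi (growth_rate n A).
Proof.
  intros Hn Hve Hext A_nonneg Hgens.
  destruct (word_length_le_l1 n gens Hgens) as [C2 [HC2 HC2b]].
  destruct (generators_bounded n gens) as [CW [HCW HCWb]].
  eapply contraction_coefficient_growth_rate; eauto.
Qed.

Theorem mainTheorem11 (n : nat) (D : vecZ -> Prop) (phi : vecZ -> vecZ)
  (A : nat -> nat -> R) (S : list vecZ) :
  (1 <= n)%nat ->
  virtual_endo n D phi ->
  linear_extension n D phi A ->
  (forall i j, (i < n)%nat -> (j < n)%nat -> 0 <= A i j) ->
  sym_gen_set n S ->
  exists r, is_spectral_radius n A r /\ contraction_coefficient n S D phi r.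
Proof.
  intros Hn Hve Hext A_nonneg HS. exists (growth_rate n A). split.
  - apply growth_rate_spectral_radius; auto.
  - apply contraction_coefficient_is_growth_rate; auto.
Qed.
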